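(* Let $(a_n)_{n\ge1}$ be real with $|a_n|\le1$, $\gamma_n=\operatorname{sign}(a_n)$, and let $N_1<N_2<\cdots$ be integers with $\lim_{j\to\infty}\frac1{N_j}\sum_{n=1}^{N_j}|a_n|=\theta>0$. For each sufficiently large $j$ let $m=m(j)$ be the unique index with $q_{m+1}/3\le N_j<q_{m+2}/3$, and put $q=q_{m}$, $M=\lfloor N_j/q\rfloor$, $M'=\lfloor qM/(q-1)\rfloor$. Then for all sufficiently large $j$, either there is $c\in\{0,\dots,q-1\}$ with $$A^{q,M}_{c,c}\ge\frac{\theta}{8q},$$ or there is $d\in\{0,\dots,q-2\}$ with $$-A^{q-1,M'}_{d+1,d}\ge\frac{\theta}{8q}.$$
   Context: Fix integers $2\le q_1<q_2<\cdots$ such that $q_{k+1}>q_k^4+3q_k$ for every $k\ge1$. (In the paper's notation, $q=q^{(i')}_{k'}$ where $q^{(0)}_k=q_{2k}$, $q^{(1)}_k=q_{2k+1}$, and $q-1=q^{(i'+2)}_{k'}$.) For integers $q,M\ge1$ and $r,c\ge0$ set $$A^{q,M}_{r,c}=\frac1{qM}\sum_{b=r}^{q-1+r}\sum_{n=1}^M\gamma(qn+c)\,a(qn+b).$$ *)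

From HB Require Import structures.
From mathcomp Require Import all_boot all_order all_algebra.
From mathcomp Require Import all_classical all_reals all_analysis.
Set Implicit Arguments. Unset Strict Implicit. Unset Printing Implicit Defensive.
Import Order.TTheory GRing.Theory Num.Theory.
Local Open Scope ring_scope.

Definition gamma (R : realType) (a : nat -> R) (n : nat) : R := Num.sg (a n).

Definition Aqm (R : realType) (a : nat -> R) (q M r c : nat) : R :=
  ((q * M)%:R)^-1 *
  \sum_(r <= b < q + r) \sum_(1 <= n < M.+1)
      gamma a (q * n + c) * a (q * n + b).

From HB Require Import structures.
From mathcomp Require Import all_boot all_order all_algebra.
From mathcomp Require Import all_classical all_reals all_analysis.
From mathcomp Require Import zify ring lra.
Import Order.TTheory GRing.Theory Num.Theory.
Import numFieldNormedType.Exports.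
Local Open Scope classical_set_scope.
Local Open Scope ring_scope.

(* Summing A^{q,M}_{c,c} over c < q regroups into the correlations
   sum_x gamma(x) a(x+t), t < q, over x in [q, q(M+1)); the t = 0 term is
   sum_x |a x|, about theta N.  Summing A^{q-1,M'}_{d+1,d} over d < q-1 gives
   the correlations with t = 1, ..., q-1 over [q-1, (q-1)(M'+1)), a range
   that differs from the first by fewer than q points at each end.  So the
   first total minus the second is at least theta N / 2 - q^2, whereas if
   every coefficient were below theta/(8q) it would be at most theta N / 4.
   Since N >= q^4/3 and q grows with j (so that theta q > 24), this is
   impossible. *)

Lemma sum_blocks (V : nmodType) (f : nat -> V) q M :
  \sum_(1 <= n < M.+1) \sum_(0 <= c < q) f (q * n + c)%N =
  \sum_(q <= x < q * M.+1) f x.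
Proof.
elim: M => [|M IH]; first by rewrite !big_geq ?muln1.
rewrite big_nat_recr //= IH (big_cat_nat _ (n := q * M.+1) (p := q * M.+2)); [|lia|lia].
congr (_ + _); rewrite -[in RHS](add0n (q * M.+1)%N) big_addn.
have -> : (q * M.+2 - q * M.+1 = q)%N by rewrite !mulnS; lia.
by apply: eq_bigr => i _; rewrite addnC.
Qed.

Lemma norm_sum_nat_le (R : numDomainType) (f : nat -> R) lo hi :
  (forall x, (lo <= x < hi)%N -> `|f x| <= 1) ->
  `|\sum_(lo <= x < hi) f x| <= (hi - lo)%:R.
Proof.
move=> f_le1; apply: le_trans (ler_norm_sum _ _ _) _.
by rewrite -sumr_const_nat; exact: ler_sum_nat.
Qed.

Lemma sum_shifted_range_sub_ge (R : realFieldType) (f : nat -> R) p hi1 hi2 :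
  (forall x, (1 <= x)%N -> `|f x| <= 1) -> (0 < p)%N ->
  (p.+1 <= hi2 <= hi1)%N -> (hi1 <= hi2 + p)%N ->
  - p.+1%:R <= \sum_(p.+1 <= x < hi1) f x - \sum_(p <= x < hi2) f x.
Proof.
move=> f_le1 p_gt0 /andP[p_hi2 hi2_hi1] hi1_le.
rewrite (big_cat_nat _ (n := hi2)) //= (big_ltn (m := p)) ?(ltnW p_hi2) //.
have tail : `|\sum_(hi2 <= x < hi1) f x| <= p%:R.
  apply: le_trans (@norm_sum_nat_le _ f hi2 hi1 _) _.
    by move=> x /andP[hx _]; apply: f_le1; lia.
  by rewrite ler_nat; lia.
have head : `|f p| <= 1 by exact: f_le1.
move: tail head; rewrite !ler_norml -natr1 => /andP[? _] /andP[_ ?]; lra.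
Qed.

Lemma sqr_lt_of_quartic_le (R : realFieldType) (theta q Nn : R) :
  2 <= q -> 24 < theta * q -> q ^+ 4 <= 3 * Nn -> 4 * q ^+ 2 < theta * Nn.
Proof.
move=> q_ge2 theta_q qN.
have theta_gt0 : 0 < theta by nra.
have q3 : 2 * q ^+ 2 <= q ^+ 3 by rewrite exprS ler_wpM2r ?sqr_ge0.
have : 24 * q ^+ 3 < theta * q * q ^+ 3 by rewrite ltr_pM2r ?exprn_gt0 //; lra.
have : theta * q ^+ 4 <= theta * (3 * Nn) by rewrite ler_pM2l.
have : 0 < q ^+ 2 by rewrite exprn_gt0 //; lra.
have -> : theta * q ^+ 4 = theta * q * q ^+ 3 by ring.
lra.
Qed.

Lemma incr_geq_index (f : nat -> nat) k0 :
  (forall k, (k0 <= k)%N -> (f k < f k.+1)%N) -> (k0 <= f k0)%N ->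
  forall k, (k0 <= k)%N -> (k <= f k)%N.
Proof.
move=> f_incr f_k0; elim=> [//|k IH].
rewrite leq_eqVlt => /orP[/eqP <- // | k0_lt].
exact: leq_ltn_trans (IH k0_lt) (f_incr _ k0_lt).
Qed.

Lemma incr_leq (f : nat -> nat) i j :
  (forall k, (1 <= k)%N -> (f k < f k.+1)%N) -> (1 <= i <= j)%N -> (f i <= f j)%N.
Proof.
move=> f_incr /andP[i_ge1 i_le_j].
have f_homo : {homo (fun n => f n.+1) : m n / (m <= n)%N}.
  by apply: homo_leq => [//|????|n]; [exact: leq_trans | exact: ltnW (f_incr _ _)].
by have := f_homo i.-1 j.-1; rewrite !prednK //; [apply; lia | lia].
Qed.

Section Correlation.
Variables (R : realType) (a : nat -> R).

Definition corr (t lo hi : nat) : R :=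
  \sum_(lo <= x < hi) gamma a x * a (x + t)%N.

Lemma corr0 lo hi : corr 0 lo hi = \sum_(lo <= x < hi) `|a x|.
Proof. by apply: eq_bigr => x _; rewrite addn0 normrEsg. Qed.

Lemma sum_Aqm_diag q M s : (0 < q * M)%N ->
  \sum_(0 <= c < q) Aqm a q M (s + c) c * (q * M)%:R =
  \sum_(0 <= t < q) corr (s + t) q (q * M.+1).
Proof.
move=> qM_gt0.
transitivity (\sum_(0 <= c < q) \sum_(0 <= t < q) \sum_(1 <= n < M.+1)
    gamma a (q * n + c)%N * a ((q * n + c) + (s + t))%N).
  apply: eq_bigr => c _; rewrite /Aqm mulrC mulrA mulfV ?mul1r ?pnatr_eq0 -?lt0n //.
  rewrite -{1}(add0n (s + c)%N) big_addn addnK.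
  apply: eq_bigr => t _; apply: eq_bigr => n _; congr (_ * a _); lia.
rewrite exchange_big_nat; apply: eq_bigr => t _.
by rewrite exchange_big_nat (@sum_blocks _ (fun x => gamma a x * a (x + (s + t))%N)).
Qed.

Hypothesis a_le1 : forall n, (1 <= n)%N -> `|a n| <= 1.

Lemma norm_gamma_mul_le1 x t : (1 <= x)%N -> `|gamma a x * a (x + t)%N| <= 1.
Proof.
move=> x_ge1; rewrite normrM; apply: mulr_ile1 => //.
  by rewrite normr_sg; case: (_ != 0).
by apply: a_le1; lia.
Qed.

(* With M' := (p+1)M %/ p the two ranges [p+1, (p+1)(M+1)) and
   [p, p(M'+1)) differ by fewer than p+1 points at each end. *)
Lemma sum_corr_sub_ge p M : (0 < p)%N -> (0 < M)%N ->
  \sum_(p.+1 <= x < p.+1 * M.+1) `|a x| - (p.+1 * p)%:R <=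
  \sum_(0 <= t < p.+1) corr t p.+1 (p.+1 * M.+1)
  - \sum_(0 <= t < p) corr t.+1 p (p * (p.+1 * M %/ p).+1).
Proof.
move=> p_gt0 M_gt0.
set M' := (p.+1 * M %/ p)%N.
have := divn_eq (p.+1 * M) p; have := ltn_pmod (p.+1 * M) p_gt0.
rewrite -/M' [(M' * p)%N]mulnC => mod_lt div_eq.
have M'_gt0 : (0 < M')%N.
  by rewrite divn_gt0 // (leq_trans (leqnSn p)) // leq_pmulr.
have pM' := leq_pmulr p M'_gt0; have pM := leq_pmulr p.+1 M_gt0.
have shifted : - (p.+1 * p)%:R <= \sum_(0 <= t < p)
    (corr t.+1 p.+1 (p.+1 * M.+1) - corr t.+1 p (p * M'.+1)).
  rewrite natrM mulr_natr -(subn0 p) -sumr_const_nat -sumrN subn0.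
  apply: ler_sum_nat => t _.
  apply: sum_shifted_range_sub_ge (fun x => norm_gamma_mul_le1 x t.+1) _ _ _ => //;
    rewrite ?mulnS; lia.
rewrite (big_nat_recl p 0) // corr0; rewrite sumrB in shifted; lra.
Qed.

Lemma sum_norm_le_blocks q Nn : (0 < q <= Nn)%N ->
  \sum_(1 <= n < Nn.+1) `|a n| - q%:R <= \sum_(q <= x < q * (Nn %/ q).+1) `|a x|.
Proof.
move=> /andP[q_gt0 q_le].
have Nn_lt : (Nn < q * (Nn %/ q).+1)%N.
  by have := divn_eq Nn q; have := ltn_pmod Nn q_gt0; rewrite mulnS mulnC; lia.
rewrite (big_cat_nat _ (n := q)) //=; last lia.
rewrite [X in _ <= X](big_cat_nat _ (n := Nn.+1)) //=; last lia.
have head : \sum_(1 <= n < q) `|a n| <= q%:R.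
  apply: le_trans (ler_norm _) _.
  apply: le_trans (@norm_sum_nat_le _ (fun n => `|a n|) 1 q _) _.
    by move=> n /andP[n_ge1 _]; rewrite normr_id; exact: a_le1.
  by rewrite ler_nat leq_subr.
have tail : 0 <= \sum_(Nn.+1 <= n < q * (Nn %/ q).+1) `|a n| by exact: sumr_ge0.
lra.
Qed.

Lemma Aqm_dichotomy theta Nn q : (2 <= q)%N -> 24 < theta * q%:R ->
  (q ^ 4 <= 3 * Nn)%N -> theta / 2 * Nn%:R < \sum_(1 <= n < Nn.+1) `|a n| ->
  let M := (Nn %/ q)%N in let M' := (q * M %/ (q - 1))%N in
  (exists c, (c < q)%N /\ theta / (8 * q%:R) <= Aqm a q M c c) \/
  (exists d, (d <= q - 2)%N /\ theta / (8 * q%:R) <= - Aqm a (q - 1) M' d.+1 d).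
Proof.
case: q => [//|p] q_ge2 theta_q qN S_gt; rewrite !subSS subn0.
have p_gt0 : (0 < p)%N by [].
set M := (Nn %/ p.+1)%N; set M' := (p.+1 * M %/ p)%N; set x := theta / _.
have theta_gt0 : 0 < theta by have := ler0n R p.+1; nra.
have q_le_Nn : (p.+1 <= Nn)%N by move: qN; rewrite !expnS expn0; nia.
have M_gt0 : (0 < M)%N by rewrite divn_gt0.
have M'_gt0 : (0 < M')%N.
  by rewrite divn_gt0 // (leq_trans (leqnSn p)) // leq_pmulr.
have qM_gt0 : (0 < p.+1 * M)%N by rewrite muln_gt0 M_gt0.
have pM'_gt0 : (0 < p * M')%N by rewrite muln_gt0 p_gt0.
have qM_le : (p.+1 * M <= Nn)%N by rewrite mulnC leq_divM.
have pM'_le : (p * M' <= p.+1 * M)%N by rewrite mulnC leq_divM.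
have qx : p.+1%:R * x = theta / 8.
  by rewrite /x; field; rewrite addrC natr1 pnatr_eq0.
have px : p%:R * x <= theta / 8.
  by rewrite -qx ler_wpM2r ?ler_nat // /x divr_ge0 ?mulr_ge0 ?ltW.
have T1 : \sum_(0 <= c < p.+1) Aqm a p.+1 M c c * (p.+1 * M)%:R =
  \sum_(0 <= t < p.+1) corr t p.+1 (p.+1 * M.+1) :=
  sum_Aqm_diag _ _ 0 qM_gt0.
have T2 : \sum_(0 <= d < p) Aqm a p M' d.+1 d * (p * M')%:R =
  \sum_(0 <= t < p) corr t.+1 p (p * M'.+1) :=
  sum_Aqm_diag _ _ 1 pM'_gt0.
case: (pselect (exists c, (c < p.+1)%N /\ x <= Aqm a p.+1 M c c)) => [|no_c];
  [by left | right; apply: contrapT => no_d].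
have upper1 : \sum_(0 <= c < p.+1) Aqm a p.+1 M c c * (p.+1 * M)%:R
    <= theta / 8 * Nn%:R.
  apply: le_trans (ler_sum_nat (G := fun=> x * (p.+1 * M)%:R) _) _.
    move=> c /andP[_ c_lt]; rewrite ler_pM2r ?ltr0n //.
    by rewrite leNgt; apply/negP => x_lt; apply: no_c; exists c; split => //; exact: ltW.
  rewrite sumr_const_nat subn0 -[_ *+ p.+1]mulr_natl mulrA qx.
  by apply: ler_wpM2l; [lra | rewrite ler_nat].
have upper2 : - \sum_(0 <= d < p) Aqm a p M' d.+1 d * (p * M')%:R
    <= theta / 8 * Nn%:R.
  rewrite -sumrN; apply: le_trans (ler_sum_nat (G := fun=> x * (p * M')%:R) _) _.
    move=> d /andP[_ d_lt]; rewrite -mulNr ler_pM2r ?ltr0n //.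
    rewrite leNgt; apply/negP => x_lt; apply: no_d; exists d.
    by split; [lia | exact: ltW].
  rewrite sumr_const_nat subn0 -[_ *+ p]mulr_natl mulrA.
  apply: le_trans (ler_wpM2r _ px) _; first exact: ler0n.
  by apply: ler_wpM2l; [lra | rewrite ler_nat; lia].
have lower := sum_corr_sub_ge _ _ p_gt0 M_gt0.
have prefix := @sum_norm_le_blocks p.+1 Nn ltac:(lia).
have := @sqr_lt_of_quartic_le R theta p.+1%:R Nn%:R.
rewrite ler_nat -natrX -(natrM R 3) ler_nat => /(_ q_ge2 theta_q qN).
have -> : p.+1%:R ^+ 2 = (p.+1 * p)%:R + p.+1%:R :> R.
  by rewrite -natrX -natrD; congr _%:R; lia.
rewrite -T1 -T2 in lower; lra.
Qed.

End Correlation.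

Theorem mainTheorem8 (R : realType) (qs : nat -> nat) (a : nat -> R)
    (N : nat -> nat) (theta : R) :
  (2 <= qs 1)%N ->
  (forall k, (1 <= k)%N -> (qs k < qs k.+1)%N) ->
  (forall k, (1 <= k)%N -> (qs k ^ 4 + 3 * qs k < qs k.+1)%N) ->
  (forall n, (1 <= n)%N -> `|a n| <= 1) ->
  (forall j, (N j < N j.+1)%N) ->
  0 < theta ->
  (fun j => ((N j)%:R)^-1 * \sum_(1 <= n < (N j).+1) `|a n|) @ \oo --> theta ->
  exists J : nat, forall j : nat, (J <= j)%N ->
    forall m : nat, (1 <= m)%N ->
      ((qs m.+1)%:R / 3 <= (N j)%:R :> R) -> ((N j)%:R < (qs m.+2)%:R / 3 :> R) ->
      let q := qs m in
      let M := (N j %/ q)%N in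
      let M' := ((q * M) %/ (q - 1))%N in
      (exists c : nat, (c < q)%N /\ theta / (8 * q%:R) <= Aqm a q M c c)
      \/
      (exists d : nat, (d <= q - 2)%N /\
         theta / (8 * q%:R) <= - Aqm a (q - 1) M' d.+1 d).
Proof.
move=> qs1 qs_incr qs_grow a_le1 N_incr theta_gt0 avg_cvg.
have [J _ avg_gt] := cvgr_gt theta avg_cvg (theta / 2) ltac:(lra).
pose K := (Num.truncn (24 / theta)).+1.
exists (maxn J (qs K.+2)) => j; rewrite geq_max => /andP[J_j qsK_j] m m_ge1 N_ge N_lt.
have j_le_N : (j <= N j)%N := @incr_geq_index N 0 (fun k _ => N_incr k) (leq0n _) j (leq0n j).
have qs_N : (qs m.+1 <= 3 * N j)%N.
  by rewrite -(ler_nat R) natrM; move: N_ge; rewrite ler_pdivrMr //; lra.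
have N_qs : (N j < qs m.+2)%N.
  by rewrite -(ltr_nat R); apply: lt_le_trans N_lt _; rewrite ler_pdivrMr // ler_peMr //; lra.
have K_lt_m : (K < m)%N.
  by rewrite ltnNge; apply/negP => m_le_K; have := @incr_leq qs m.+2 K.+2 qs_incr; lia.
have m_le_q : (m <= qs m)%N := @incr_geq_index qs 1 qs_incr (ltnW qs1) m m_ge1.
have q_grow := qs_grow m m_ge1.
apply: Aqm_dichotomy => //.
- by have := @incr_leq qs 1 m qs_incr; lia.
- have := truncnS_gt (24 / theta); rewrite -/K ltr_pdivrMr // => K_gt.
  by apply: lt_le_trans K_gt _; rewrite mulrC ler_pM2l // ler_nat; lia.
- lia.
- have := avg_gt j J_j; rewrite /= [X in _ < X]mulrC ltr_pdivlMr // ltr0n; lia.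
Qed.
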